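(* Let $\mathbb{K}$ be a field of characteristic $0$ and consider the algebra $\mathbb{K}\langle\theta_1,\theta_3,\theta_4,\theta_5\rangle/I$, where $I$ is the two-sided ideal generated by the following elements: $\theta_1^2-\theta_1$, $\theta_4^2$, $\theta_4\theta_5$, $\theta_4\theta_1+\theta_4\theta_3-2\theta_4-\theta_5\theta_4-\theta_5^2$, $\theta_3^2-\theta_3+\theta_5-3\theta_3\theta_4-\theta_3\theta_5-\theta_1\theta_4-\theta_5\theta_1$, $\theta_3\theta_1-\theta_1-\theta_4-\tfrac12\theta_4\theta_1+\tfrac12\theta_4\theta_3+\theta_5\theta_1-\tfrac12\theta_5\theta_4+\tfrac12\theta_5^2+\theta_3\theta_4-\theta_1\theta_5-\theta_3\theta_5$, $\theta_1\theta_3-\theta_3+\theta_4+\theta_5-\tfrac32\theta_4\theta_1+\tfrac32\theta_4\theta_3-2\theta_5\theta_1-\tfrac32\theta_5\theta_4+\tfrac32\theta_5^2+3\theta_3\theta_4+\theta_3\theta_5$, $\theta_5\theta_3-\theta_4\theta_1+\theta_4\theta_3-\theta_5\theta_1-\theta_5\theta_4+\theta_5^2$, $\theta_5\theta_1\theta_5-\theta_5^2\theta_1-\theta_5\theta_4$, $\theta_5\theta_4\theta_1-\theta_5^3+\theta_5\theta_1\theta_4+\theta_5^2\theta_1$, $\theta_4\theta_1\theta_5+\theta_5^2\theta_1+\theta_5\theta_4-\theta_5^3$, $\theta_5\theta_3\theta_4+\theta_5\theta_1\theta_4$, $\theta_3\theta_5\theta_1-\theta_1\theta_5-\theta_3\theta_5+\theta_3\theta_4+\theta_5^2$,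 $\theta_4\theta_1\theta_5+\theta_4\theta_3\theta_5-\theta_5^3$, $\theta_4\theta_3\theta_5-\theta_5\theta_1\theta_5$, $\theta_1\theta_5\theta_1+\theta_1\theta_5+\theta_3\theta_5-\theta_5^2+\theta_1\theta_4-\theta_5^2\theta_1-\theta_5\theta_4-\theta_3\theta_5^2$, $\theta_1\theta_5\theta_3-2\theta_3\theta_4-\theta_1\theta_5-\theta_3\theta_5+\theta_5^2+3\theta_5\theta_4-\theta_1\theta_4+\theta_5^2\theta_1+\theta_3\theta_5^2+2\theta_5\theta_1\theta_4+2\theta_3\theta_5\theta_4$, $\theta_3\theta_4\theta_1+\theta_1\theta_4+\theta_1\theta_5+\theta_3\theta_5-\theta_5\theta_4-\theta_3\theta_5^2-\theta_5^2$. Then the set (of classes modulo $I$) $$\{\theta_4\theta_1,\theta_3,\theta_1\}\cup\{\theta_5^n: n\ge0\}\cup\{\theta_5^n\theta_4: n\ge0\}\cup\{\theta_5^n\theta_1\theta_4: n\ge0\}\cup\{\theta_5^n\theta_1: n\ge1\}\cup\{\theta_3\theta_5^n: n\ge1\}$$ $$\cup\{\theta_1\theta_5^n: n\ge1\}\cup\{\theta_3\theta_5^n\theta_4: n\ge0\}\cup\{\theta_1\theta_5^n\theta_4: n\ge1\}$$ is a system of generators for $\mathbb{K}\langle\theta_1,\theta_3,\theta_4,\theta_5\rangle/I$ as a free $\mathbb{K}$-vector space.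
   Context: $\mathbb{K}\langle\theta_1,\theta_3,\theta_4,\theta_5\rangle$ denotes the free (noncommutative) associative $\mathbb{K}$-algebra on the four letters $\theta_1,\theta_3,\theta_4,\theta_5$. *)

(* The free associative algebra K<t1,t3,t4,t5> is realised as
   the monoid algebra {malg K[{fmonom 'I_4}]} of the free monoid on 4 letters
   (multinomials' monalg). *)
From HB Require Import structures.
From mathcomp Require Import all_boot all_algebra.
From mathcomp.multinomials Require Import monalg.
Set Implicit Arguments. Unset Strict Implicit. Unset Printing Implicit Defensive.
Import GRing.Theory.
Local Open Scope ring_scope.

Definition freeAlg (K : fieldType) := {malg K[{fmonom 'I_4}]}.

Definition letter (K : fieldType) (i : 'I_4) : freeAlg K := << fmu i >>.
Definition th1 (K : fieldType) : freeAlg K := letter K 0.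
Definition th3 (K : fieldType) : freeAlg K := letter K 1.
Definition th4 (K : fieldType) : freeAlg K := letter K 2.
Definition th5 (K : fieldType) : freeAlg K := letter K 3.

Definition in_twosided_ideal (R : ringType) (G : R -> Prop) (f : R) : Prop :=
  exists s : seq (R * R * R),
    (forall t, t \in s -> G t.1.2) /\
    f = \sum_(t <- s) t.1.1 * t.1.2 * t.2.

Definition Igens (K : fieldType) : seq (freeAlg K) :=
  let t1 := th1 K in let t3 := th3 K in let t4 := th4 K in let t5 := th5 K in
  let h : freeAlg K := (2%:R)^-1%:A in
  let h3 : freeAlg K := (3%:R / 2%:R)%:A in
  [:: t1 ^+ 2 - t1;
      t4 ^+ 2;
      t4 * t5;
      t4 * t1 + t4 * t3 - 2%:R * t4 - t5 * t4 - t5 ^+ 2;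
      t3 ^+ 2 - t3 + t5 - 3%:R * (t3 * t4) - t3 * t5 - t1 * t4 - t5 * t1;
      t3 * t1 - t1 - t4 - h * (t4 * t1) + h * (t4 * t3) + t5 * t1
        - h * (t5 * t4) + h * t5 ^+ 2 + t3 * t4 - t1 * t5 - t3 * t5;
      t1 * t3 - t3 + t4 + t5 - h3 * (t4 * t1) + h3 * (t4 * t3)
        - 2%:R * (t5 * t1) - h3 * (t5 * t4) + h3 * t5 ^+ 2
        + 3%:R * (t3 * t4) + t3 * t5;
      t5 * t3 - t4 * t1 + t4 * t3 - t5 * t1 - t5 * t4 + t5 ^+ 2;
      t5 * t1 * t5 - t5 ^+ 2 * t1 - t5 * t4;
      t5 * t4 * t1 - t5 ^+ 3 + t5 * t1 * t4 + t5 ^+ 2 * t1;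
      t4 * t1 * t5 + t5 ^+ 2 * t1 + t5 * t4 - t5 ^+ 3;
      t5 * t3 * t4 + t5 * t1 * t4;
      t3 * t5 * t1 - t1 * t5 - t3 * t5 + t3 * t4 + t5 ^+ 2;
      t4 * t1 * t5 + t4 * t3 * t5 - t5 ^+ 3;
      t4 * t3 * t5 - t5 * t1 * t5;
      t1 * t5 * t1 + t1 * t5 + t3 * t5 - t5 ^+ 2 + t1 * t4 - t5 ^+ 2 * t1
        - t5 * t4 - t3 * t5 ^+ 2;
      t1 * t5 * t3 - 2%:R * (t3 * t4) - t1 * t5 - t3 * t5 + t5 ^+ 2
        + 3%:R * (t5 * t4) - t1 * t4 + t5 ^+ 2 * t1 + t3 * t5 ^+ 2
        + 2%:R * (t5 * t1 * t4) + 2%:R * (t3 * t5 * t4);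
      t3 * t4 * t1 + t1 * t4 + t1 * t5 + t3 * t5 - t5 * t4
        - t3 * t5 ^+ 2 - t5 ^+ 2].

Definition inI (K : fieldType) (f : freeAlg K) : Prop :=
  in_twosided_ideal (fun g => g \in Igens K) f.

Definition Bset (K : fieldType) (b : freeAlg K) : Prop :=
  let t1 := th1 K in let t3 := th3 K in let t4 := th4 K in let t5 := th5 K in
  b = t4 * t1 \/ b = t3 \/ b = t1 \/
  (exists n : nat, b = t5 ^+ n) \/
  (exists n : nat, b = t5 ^+ n * t4) \/
  (exists n : nat, b = t5 ^+ n * t1 * t4) \/
  (exists n : nat, (1 <= n)%N /\ b = t5 ^+ n * t1) \/
  (exists n : nat, (1 <= n)%N /\ b = t3 * t5 ^+ n) \/
  (exists n : nat, (1 <= n)%N /\ b = t1 * t5 ^+ n) \/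
  (exists n : nat, b = t3 * t5 ^+ n * t4) \/
  (exists n : nat, (1 <= n)%N /\ b = t1 * t5 ^+ n * t4).

From HB Require Import structures.
From mathcomp Require Import all_boot all_algebra.
From mathcomp.multinomials Require Import monalg.
From mathcomp Require Import ring.
Import GRing.Theory.
Set Implicit Arguments.
Unset Strict Implicit.
Unset Printing Implicit Defensive.
Local Open Scope ring_scope.

(* Write Bspan f when f is congruent modulo I to a K-linear combination of Bset.  Such
   elements form a subspace containing 1, and every element of the free algebra is a
   combination of words, so it suffices that b * x is in Bspan for every b in Bset and every
   letter x.  This is a case analysis over the eleven families of Bset, driven by reduction
   rules w = r (mod I) whose certificates are explicit two-sided combinations of the
   generators of I.  The unbounded powers of t5 are dealt with in two ways: the words
   t4 t1, t5^n, t5^n t4, t5^n t1 and t5^n t1 t4 span, modulo I, a subspace stable under left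
   multiplication by t5, and the families t3 t5^n ... and t1 t5^n ... are treated by
   induction on n. *)

(** * Two-sided ideals and spans modulo an ideal *)

Section TwoSidedIdeal.
Variables (R : nzRingType) (G : R -> Prop).
Local Notation inJ := (in_twosided_ideal G).

Lemma in_ideal0 : inJ 0.
Proof. by exists [::]; rewrite big_nil. Qed.

Lemma in_ideal_gen g : G g -> inJ g.
Proof.
by move=> Gg; exists [:: (1, g, 1)]; split=> [t /[1!inE] /eqP ->|]; rewrite ?big_seq1 ?mul1r ?mulr1.
Qed.

Lemma in_idealD f g : inJ f -> inJ g -> inJ (f + g).
Proof.
move=> [s [Gs ->]] [t [Gt ->]]; exists (s ++ t); split; last by rewrite big_cat.
by move=> u; rewrite mem_cat => /orP[/Gs|/Gt].
Qed.

Lemma in_idealMl a f : inJ f -> inJ (a * f).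
Proof.
move=> [s [Gs ->]]; exists [seq (a * t.1.1, t.1.2, t.2) | t <- s]; split.
  by move=> u /mapP[t /Gs Gt ->].
by rewrite big_map mulr_sumr; apply: eq_bigr => t _; rewrite !mulrA.
Qed.

Lemma in_idealMr f b : inJ f -> inJ (f * b).
Proof.
move=> [s [Gs ->]]; exists [seq (t.1.1, t.1.2, t.2 * b) | t <- s]; split.
  by move=> u /mapP[t /Gs Gt ->].
by rewrite big_map mulr_suml; apply: eq_bigr => t _; rewrite !mulrA.
Qed.

Lemma in_idealN f : inJ f -> inJ (- f).
Proof. by rewrite -mulN1r; apply: in_idealMl. Qed.

Definition eqmod (f g : R) := inJ (f - g).

Lemma eqmod_by c f g : f - g = c -> inJ c -> eqmod f g.
Proof. by rewrite /eqmod => ->. Qed.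

Lemma eqmodMl a f g : eqmod f g -> eqmod (a * f) (a * g).
Proof. by move=> fg; rewrite /eqmod -mulrBr; apply: in_idealMl fg. Qed.

Lemma eqmod_byMl w r : eqmod w r -> forall a f g, f - g = a * (w - r) -> eqmod f g.
Proof. by rewrite /eqmod => wr a f g ->; apply: in_idealMl. Qed.

End TwoSidedIdeal.

Lemma in_idealZ (K : pzRingType) (A : lalgType K) (G : A -> Prop) c f :
  in_twosided_ideal G f -> in_twosided_ideal G (c *: f).
Proof. by move=> Jf; rewrite -[f]mul1r scalerAl; apply: in_idealMl. Qed.

Section SpanModuloIdeal.
Variables (K : pzRingType) (A : lalgType K) (G : A -> Prop).
Local Notation inJ := (in_twosided_ideal G).

Definition span_mod (S : A -> Prop) (f : A) :=
  exists s : seq (K * A),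
    (forall t, t \in s -> S t.2) /\ inJ (f - \sum_(t <- s) t.1 *: t.2).

Variable S : A -> Prop.
Local Notation span := (span_mod S).

Lemma span_mod_mem b : S b -> span b.
Proof.
move=> Sb; exists [:: (1, b)]; split=> [t /[1!inE] /eqP -> //|].
by rewrite big_seq1 scale1r subrr; apply: in_ideal0.
Qed.

Lemma span_mod_eqmod f g : eqmod G f g -> span g -> span f.
Proof.
move=> fg [s [Ss gs]]; exists s; split=> //.
by rewrite -[f](subrK g) -addrA; apply: in_idealD.
Qed.

Lemma span_mod0 : span 0.
Proof. by exists [::]; rewrite big_nil subr0; split=> //; apply: in_ideal0. Qed.

Lemma span_modD f g : span f -> span g -> span (f + g).
Proof.
move=> [s [Ss fs]] [t [St gt]]; exists (s ++ t); split.
  by move=> u; rewrite mem_cat => /orP[/Ss|/St].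
by rewrite big_cat opprD addrACA; apply: in_idealD.
Qed.

Lemma span_modZ c f : span f -> span (c *: f).
Proof.
move=> [s [Ss fs]]; exists [seq (c * t.1, t.2) | t <- s]; split.
  by move=> u /mapP[t /Ss St ->].
rewrite big_map (eq_bigr (fun t => c *: (t.1 *: t.2))) => [|t _]; last by rewrite scalerA.
by rewrite -scaler_sumr -scalerBr; apply: in_idealZ.
Qed.

Lemma span_modN f : span f -> span (- f).
Proof. by rewrite -scaleN1r; apply: span_modZ. Qed.

Lemma span_modM0 a w : eqmod G w 0 -> span (a * w).
Proof. by move/(eqmodMl a)/span_mod_eqmod; rewrite mulr0; apply; apply: span_mod0. Qed.

Lemma span_mod_sum (s : seq (K * A)) (F : A -> A) :
  (forall t, t \in s -> span (F t.2)) -> span (\sum_(t <- s) t.1 *: F t.2).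
Proof.
elim: s => [|t s IHs] Fs; first by rewrite big_nil; apply: span_mod0.
rewrite big_cons; apply: span_modD; first by apply/span_modZ/Fs; rewrite mem_head.
by apply: IHs => u su; apply: Fs; rewrite inE su orbT.
Qed.

Lemma span_modMr x f : (forall b, S b -> span (b * x)) -> span f -> span (f * x).
Proof.
move=> Sx [s [Ss fs]].
apply: (span_mod_eqmod (g := \sum_(t <- s) t.1 *: (t.2 * x))).
  rewrite /eqmod (eq_bigr (fun t => t.1 *: t.2 * x)) => [|t _]; last by rewrite scalerAl.
  by rewrite -mulr_suml -mulrBl; apply: in_idealMr.
by apply: (span_mod_sum (F := fun b => b * x)) => t /Ss; apply: Sx.
Qed.

Hypothesis scalerAr_A : forall (c : K) (x y : A), x * (c *: y) = c *: (x * y).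

Lemma span_modMl x f : (forall b, S b -> span (x * b)) -> span f -> span (x * f).
Proof.
move=> Sx [s [Ss fs]].
apply: (span_mod_eqmod (g := \sum_(t <- s) t.1 *: (x * t.2))).
  rewrite /eqmod (eq_bigr (fun t => x * (t.1 *: t.2))) => [|t _]; last by rewrite scalerAr_A.
  by rewrite -mulr_sumr -mulrBr; apply: in_idealMl.
by apply: (span_mod_sum (F := fun b => x * b)) => t /Ss; apply: Sx.
Qed.

End SpanModuloIdeal.

Lemma span_mod_sub (K : pzRingType) (A : lalgType K) (G S S' : A -> Prop) f :
  (forall b, S b -> span_mod G S' b) -> span_mod G S f -> span_mod G S' f.
Proof.
move=> SS' [s [Ss fs]]; apply: (span_mod_eqmod fs).
by apply: (span_mod_sum (F := id)) => t /Ss; apply: SS'.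
Qed.

(** * Equations in an algebra by noncommutative normalisation *)

Section NCNormalisation.
Variable K : pzRingType.

Inductive ncexpr :=
  | NCAtom of nat
  | NCZero
  | NCOne
  | NCNat of nat
  | NCScale of K & ncexpr
  | NCAdd of ncexpr & ncexpr
  | NCOpp of ncexpr
  | NCMul of ncexpr & ncexpr.

Definition ncpoly := seq (K * seq nat).

Definition ncpoly_scale (c : K) (p : ncpoly) : ncpoly := [seq (c * m.1, m.2) | m <- p].

Definition ncpoly_mul (p q : ncpoly) : ncpoly :=
  [seq (m.1 * n.1, m.2 ++ n.2) | m <- p, n <- q].

Fixpoint ncnorm (e : ncexpr) : ncpoly :=
  match e with
  | NCAtom i => [:: (1, [:: i])]
  | NCZero => [::]
  | NCOne => [:: (1, [::])]
  | NCNat n => [:: (n%:R, [::])]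
  | NCScale c a => ncpoly_scale c (ncnorm a)
  | NCAdd a b => ncnorm a ++ ncnorm b
  | NCOpp a => ncpoly_scale (-1) (ncnorm a)
  | NCMul a b => ncpoly_mul (ncnorm a) (ncnorm b)
  end.

(* A structurally recursive [==] on words, which [cbv] can evaluate. *)
Fixpoint eq_word (u v : seq nat) : bool :=
  match u, v with
  | [::], [::] => true
  | i :: u', j :: v' => eqn i j && eq_word u' v'
  | _, _ => false
  end.

Fixpoint ncpoly_insert (m : K * seq nat) (p : ncpoly) : ncpoly :=
  match p with
  | [::] => [:: m]
  | n :: p' => if eq_word m.2 n.2 then (m.1 + n.1, n.2) :: p' else n :: ncpoly_insert m p'
  end.

Definition ncpoly_collect (p : ncpoly) : ncpoly := foldr ncpoly_insert [::] p.

Definition ncpoly_all_zero (p : ncpoly) : Prop := foldr (fun m P => m.1 = 0 /\ P) True p.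

Variable A : lalgType K.
Hypothesis scalerAr_A : forall (c : K) (x y : A), x * (c *: y) = c *: (x * y).
Variable env : seq A.

Fixpoint ncexpr_eval (e : ncexpr) : A :=
  match e with
  | NCAtom i => env`_i
  | NCZero => 0
  | NCOne => 1
  | NCNat n => n%:R
  | NCScale c a => c *: ncexpr_eval a
  | NCAdd a b => ncexpr_eval a + ncexpr_eval b
  | NCOpp a => - ncexpr_eval a
  | NCMul a b => ncexpr_eval a * ncexpr_eval b
  end.

Definition word_eval (w : seq nat) : A := \prod_(i <- w) env`_i.

Definition ncpoly_eval (p : ncpoly) : A := \sum_(m <- p) m.1 *: word_eval m.2.

Lemma eq_wordE u v : eq_word u v = (u == v).
Proof. by elim: u v => [|i u IHu] [|j v] //=; rewrite IHu eqseq_cons. Qed.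

Lemma ncpoly_eval_cat p q : ncpoly_eval (p ++ q) = ncpoly_eval p + ncpoly_eval q.
Proof. exact: big_cat. Qed.

Lemma ncpoly_eval_scale c p : ncpoly_eval (ncpoly_scale c p) = c *: ncpoly_eval p.
Proof. by rewrite /ncpoly_eval big_map scaler_sumr; apply: eq_bigr => m _; rewrite scalerA. Qed.

Lemma ncpoly_eval_mul p q : ncpoly_eval (ncpoly_mul p q) = ncpoly_eval p * ncpoly_eval q.
Proof.
rewrite /ncpoly_eval big_allpairs_dep mulr_suml; apply: eq_bigr => m _.
rewrite mulr_sumr; apply: eq_bigr => n _.
by rewrite /word_eval big_cat -scalerAl scalerAr_A scalerA.
Qed.

Lemma ncnormE e : ncexpr_eval e = ncpoly_eval (ncnorm e).
Proof.
have eval1 c w : ncpoly_eval [:: (c, w)] = c *: word_eval w by rewrite /ncpoly_eval big_seq1.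
elim: e => [i|||n|c a IHa|a IHa b IHb|a IHa|a IHa b IHb] /=.
- by rewrite eval1 scale1r /word_eval big_seq1.
- by rewrite /ncpoly_eval big_nil.
- by rewrite eval1 scale1r /word_eval big_nil.
- by rewrite eval1 /word_eval big_nil scaler_nat.
- by rewrite ncpoly_eval_scale IHa.
- by rewrite ncpoly_eval_cat IHa IHb.
- by rewrite ncpoly_eval_scale IHa scaleN1r.
- by rewrite ncpoly_eval_mul IHa IHb.
Qed.

Lemma ncpoly_eval_collect p : ncpoly_eval (ncpoly_collect p) = ncpoly_eval p.
Proof.
have eval_cons m q : ncpoly_eval (m :: q) = m.1 *: word_eval m.2 + ncpoly_eval q.
  exact: big_cons.
elim: p => [|m p IHp] //=; rewrite eval_cons -IHp.
elim: (ncpoly_collect p) => [|n q IHq] /=; first by rewrite /ncpoly_eval big_seq1 big_nil addr0.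
rewrite eq_wordE; case: eqP => [->|_]; first by rewrite !eval_cons scalerDl addrA.
by rewrite !eval_cons IHq addrCA.
Qed.

Lemma ncpoly_all_zero_eval p : ncpoly_all_zero p -> ncpoly_eval p = 0.
Proof.
rewrite /ncpoly_eval; elim: p => [|m p IHp] /=; first by rewrite big_nil.
by case=> m0 /IHp; rewrite big_cons m0 scale0r add0r.
Qed.

Lemma ncexpr_eq s t :
  ncpoly_all_zero (ncpoly_collect (ncnorm s ++ ncpoly_scale (-1) (ncnorm t))) ->
  ncexpr_eval s = ncexpr_eval t.
Proof.
move/ncpoly_all_zero_eval/eqP.
by rewrite ncpoly_eval_collect ncpoly_eval_cat ncpoly_eval_scale scaleN1r -!ncnormE subr_eq0 => /eqP.
Qed.
End NCNormalisation.

Ltac is_numeral n :=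
  lazymatch n with
  | O => constr:(true)
  | S ?m => is_numeral m
  | _ => constr:(false)
  end.

Ltac ncatom_add x env :=
  let rec mem e :=
    lazymatch e with
    | x :: _ => constr:(true)
    | _ :: ?e' => mem e'
    | _ => constr:(false)
    end in
  lazymatch mem env with
  | true => env
  | false => lazymatch type of env with list ?A => constr:(@cons A x env) end
  end.

Ltac ncatoms env t :=
  lazymatch t with
  | ?a + ?b => let env := ncatoms env a in ncatoms env b
  | - ?a => ncatoms env a
  | ?a * ?b => let env := ncatoms env a in ncatoms env b
  | _ *: ?a => ncatoms env a
  | ?a ^+ ?n => lazymatch is_numeral n with true => ncatoms env a | false => ncatom_add t env end
  | 0 => env
  | 1 => env
  | _ %:R => env
  | _ => ncatom_add t env
  end.

Ltac ncindex x env :=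
  lazymatch env with
  | x :: _ => constr:(0%N)
  | _ :: ?e => let i := ncindex x e in constr:(i.+1)
  end.

Ltac ncreify R env t :=
  lazymatch t with
  | ?a + ?b => let a := ncreify R env a in let b := ncreify R env b in constr:(@NCAdd R a b)
  | - ?a => let a := ncreify R env a in constr:(@NCOpp R a)
  | ?a * ?b => let a := ncreify R env a in let b := ncreify R env b in constr:(@NCMul R a b)
  | ?c *: ?a => let a := ncreify R env a in constr:(@NCScale R c a)
  | _ ^+ O => constr:(@NCOne R)
  | ?a ^+ 1 => ncreify R env a
  | ?a ^+ S ?m =>
    lazymatch is_numeral m with
    | true => let am := ncreify R env (a ^+ m) in let a := ncreify R env a in constr:(@NCMul R a am)
    | false => let i := ncindex t env in constr:(@NCAtom R i)
    end
  | 0 => constr:(@NCZero R)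
  | 1 => constr:(@NCOne R)
  | ?n %:R => constr:(@NCNat R n)
  | _ => let i := ncindex t env in constr:(@NCAtom R i)
  end.

(* Coefficient identities are left to [field]; powers whose exponent is a successor but
   not a numeral must be unfolded with [exprSr] first. *)
Ltac nc_ring_with central :=
  lazymatch goal with |- @eq ?A ?l ?r =>
    let env := ncatoms (@nil A) l in
    let env := ncatoms env r in
    let sound := constr:(@ncexpr_eq _ _ central env) in
    let R := lazymatch type of sound with forall s : ncexpr ?R, _ => R end in
    let el := ncreify R env l in
    let er := ncreify R env r in
    apply: (sound el er);
    cbv beta iota zeta delta [ncpoly_collect ncpoly_insert eq_word eqn ncnorm ncpoly_mul
      ncpoly_scale ncpoly_all_zero flatten foldr map cat fst snd andb];
    repeat split; field
  end.

Lemma fmalg_ind (R : nzRingType) (I : choiceType) (P : {malg R[{fmonom I}]} -> Prop) :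
  P 1 -> (forall f i, P f -> P (f * << fmu i >>)) ->
  (forall f g, P f -> P g -> P (f + g)) -> (forall c f, P f -> P (c *: f)) ->
  forall f, P f.
Proof.
move=> P1 PMu PD PZ f.
have Pmonom (k : {fmonom I}) : P << k >>.
  case: k => w; elim/last_ind: w => [|w i IHw].
    have -> : FMonom [::] = mone :> {fmonom I}.
      by apply: val_inj; rewrite /= -[RHS]/(fmonom_val mone) fm1.
    by rewrite mpolyC1E.
  have -> : FMonom (rcons w i) = mmul (FMonom w) (fmu i).
    by apply: val_inj; rewrite /= -[RHS]/(fmonom_val (mmul _ _)) fmM fmU cats1.
  have malgUM (k1 k2 : {fmonom I}) : << mmul k1 k2 >> = << k1 >> * << k2 >> :> {malg R[{fmonom I}]}.
    by rewrite malgM_def fgmulUU mulr1.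
  by rewrite malgUM; apply: PMu.
have Psum (s : seq {fmonom I}) : P (\sum_(k <- s) << f@_k *g k >>).
  elim: s => [|k s IHs]; first by rewrite big_nil -(scale0r 1); apply: PZ.
  rewrite big_cons; apply: PD => //.
  have -> : << f@_k *g k >> = f@_k *: << k >> :> {malg R[{fmonom I}]}.
    by apply/malgP => k'; rewrite mcoeffZ !mcoeffU mulr_natr.
  exact: PZ.
by rewrite [f]monalgE; apply: Psum.
Qed.

(* monalg declares its algebra instance on [malg] for commutative monoids only, and
   canonical instances are keyed on [malg] alone, so for the free monoid the centrality
   of scalars is passed around as this lemma. *)
Lemma fmalg_scalerAr (R : comNzRingType) (I : choiceType) (c : R) (x y : {malg R[{fmonom I}]}) :
  x * (c *: y) = c *: (x * y).
Proof.
have malgC_comm (d : R) (z : {malg R[{fmonom I}]}) : d%:MP * z = z * d%:MP.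
  rewrite [z]monalgE !(mulr_suml, mulr_sumr); apply: eq_bigr => k _.
  by rewrite !malgM_def !fgmulUU mulrC mulm1 mul1m.
by rewrite -!mul_malgC mulrA -malgC_comm mulrA.
Qed.

(** * Reduction rules modulo I *)

Section Spanning.
Variable K : fieldType.
Hypothesis charK0 : [pchar K] =i pred0.
Local Notation A := (freeAlg K).
Local Notation t1 := (th1 K).
Local Notation t3 := (th3 K).
Local Notation t4 := (th4 K).
Local Notation t5 := (th5 K).
Local Notation Igen i := (nth 0 (Igens K) i).
Local Notation Ig := (fun g : A => g \in Igens K).
Local Notation congrI := (eqmod Ig).

Lemma natr_neq0 n : (n.+1%:R : K) != 0.
Proof. by rewrite ((pcharf0P K).1 charK0). Qed.

Lemma Igen_in_ideal i : (i < size (Igens K))%N -> inI (Igen i).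
Proof. by move=> ltiI; apply: in_ideal_gen; apply: mem_nth. Qed.

Ltac in_ideal_auto :=
  lazymatch goal with
  | |- in_twosided_ideal _ (Igen _) => by apply: Igen_in_ideal
  | |- in_twosided_ideal _ (_ + _) => apply: in_idealD; in_ideal_auto
  | |- in_twosided_ideal _ (- _) => apply: in_idealN; in_ideal_auto
  | |- in_twosided_ideal _ (_ *: _) => apply: in_idealZ; in_ideal_auto
  | |- in_twosided_ideal _ (_ * Igen _) => apply: in_idealMl; in_ideal_auto
  | |- in_twosided_ideal _ (_ * _) => apply: in_idealMr; in_ideal_auto
  end.

Ltac nc_ring := nc_ring_with (@fmalg_scalerAr K 'I_4); by rewrite ?natr_neq0.

(* A reduction [w = r mod I] is certified by writing [w - r] as a two-sided combination of
   the generators [Igen i], numbered from 0 in the order of [Igens]. *)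
Ltac certificate c :=
  apply: (eqmod_by (c := c)); [cbv beta iota zeta delta [Igens nth]; nc_ring | in_ideal_auto].

Lemma red_t4t5 : congrI (t4 * t5) 0.
Proof. by certificate (Igen 2). Qed.

Lemma red_t4t4 : congrI (t4 * t4) 0.
Proof. by certificate (Igen 1). Qed.

Lemma red_t1t1 : congrI (t1 * t1) t1.
Proof. by certificate (Igen 0). Qed.

Lemma red_t3t3 : congrI (t3 * t3) (t3 + t1 * t4 + 3 *: (t3 * t4) + t3 * t5 + t5 * t1 - t5).
Proof. by certificate (Igen 4). Qed.

Lemma red_t4t3 : congrI (t4 * t3) (2 *: t4 - t4 * t1 + t5 * t4 + t5 ^+ 2).
Proof. by certificate (Igen 3). Qed.

Lemma red_t5t3 : congrI (t5 * t3) (2 *: (t4 * t1) + t5 * t1 - 2 *: t5 ^+ 2 - 2 *: t4).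
Proof. by certificate (Igen 7 - Igen 3). Qed.

Lemma red_t3t1 : congrI (t3 * t1)
  (t1 + t4 * t1 - t3 * t4 + t1 * t5 + t3 * t5 - t5 * t1 - t5 ^+ 2).
Proof. by certificate (Igen 5 - 2^-1 *: Igen 3). Qed.

Lemma red_t1t3 : congrI (t1 * t3) (t3 - 4 *: t4 - t5 + 3 *: (t4 * t1) - 3 *: (t3 * t4)
  - t3 * t5 + 2 *: (t5 * t1) - 3 *: t5 ^+ 2).
Proof. by certificate (Igen 6 - (3 / 2) *: Igen 3). Qed.

Lemma red_t5t1t5 : congrI (t5 * t1 * t5) (t5 ^+ 2 * t1 + t5 * t4).
Proof. by certificate (Igen 8). Qed.

Lemma red_t4t1t5 : congrI (t4 * t1 * t5) (t5 ^+ 3 - t5 ^+ 2 * t1 - t5 * t4).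
Proof. by certificate (Igen 10). Qed.

Lemma red_t5t4t1 : congrI (t5 * t4 * t1) (t5 ^+ 3 - t5 * t1 * t4 - t5 ^+ 2 * t1).
Proof. by certificate (Igen 9). Qed.

Lemma red_t3t5t1 : congrI (t3 * t5 * t1) (t1 * t5 - t3 * t4 + t3 * t5 - t5 ^+ 2).
Proof. by certificate (Igen 12). Qed.

Lemma red_t1t5t1 : congrI (t1 * t5 * t1)
  (t3 * t5 ^+ 2 + t5 ^+ 2 * t1 - t1 * t4 - t1 * t5 - t3 * t5 + t5 * t4 + t5 ^+ 2).
Proof. by certificate (Igen 15). Qed.

Lemma red_t3t4t1 : congrI (t3 * t4 * t1)
  (t3 * t5 ^+ 2 - t1 * t4 - t1 * t5 - t3 * t5 + t5 * t4 + t5 ^+ 2).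
Proof. by certificate (Igen 17). Qed.

Lemma red_t4t1t4 : congrI (t4 * t1 * t4) (t5 ^+ 2 * t4 - t5 * t1 * t4).
Proof.
by certificate (Igen 3 * t4 + t5 * Igen 1 + Igen 9 - Igen 13 + Igen 3 * t1 + Igen 1 * t3
  - Igen 2 * t4 - 2^-1 *: (t4 * Igen 3) - t4 * Igen 5 + Igen 2 * t1 - t4 * Igen 0).
Qed.

Lemma red_t1t4t1 : congrI (t1 * t4 * t1) (2 *: (t1 * t4) + t1 * t5 + t1 * t5 ^+ 2 + t3 * t4
  + t3 * t5 - t3 * t5 ^+ 2 - t3 * t5 * t4 - t5 * t1 * t4 - t5 ^+ 2 * t1 - 2 *: (t5 * t4)
  - t5 ^+ 2).
Proof.
by certificate (2^-1 *: (Igen 16 - Igen 15 + t1 * Igen 3 - t1 * Igen 7)).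
Qed.

Lemma red_t1t4t3 : congrI (t1 * t4 * t3) (t1 * t5 * t4 + t3 * t5 * t4 + t3 * t5 ^+ 2
  + t5 * t1 * t4 + t5 ^+ 2 * t1 - t1 * t5 - t3 * t4 - t3 * t5 + 2 *: (t5 * t4) + t5 ^+ 2).
Proof.
by certificate (2^-1 *: (Igen 15 - Igen 16 + t1 * Igen 3 + t1 * Igen 7)).
Qed.

Lemma red_t4t1t3 : congrI (t4 * t1 * t3)
  (2 *: t4 - t4 * t1 - 3 *: (t5 * t1 * t4) - t5 ^+ 2 * t1 + t5 ^+ 2).
Proof.
by certificate (2^-1 *: (t5 * Igen 4) + 2^-1 *: (Igen 3 * t3) - 2^-1 *: (Igen 7 * t3)
  - 2^-1 *: (t5 * Igen 6) + t5 * Igen 7 + 2^-1 *: Igen 9 - 4^-1 *: (t5 * Igen 3) + Igen 8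
  + 2 *: Igen 10 + Igen 7 * t5 - Igen 3 * t5 + 3 *: Igen 11 - 2 *: Igen 2 + Igen 3).
Qed.

Lemma red_t5t1t3 : congrI (t5 * t1 * t3)
  (2 *: (t4 * t1) + t5 * t1 - 3 *: (t5 * t4) - 3 *: t5 ^+ 2 - 2 *: t4).
Proof.
by certificate (Igen 7 - Igen 3 - Igen 8 - Igen 7 * t5 + Igen 3 * t5 - 2 *: Igen 10
  + 3 *: Igen 9 - (3 / 2) *: (t5 * Igen 3) + t5 * Igen 6 - 3 *: Igen 11 + 2 *: Igen 2).
Qed.

Lemma red_t5t1t4t1 : congrI (t5 * t1 * t4 * t1) (t5 ^+ 3 * t1 + t5 * t1 * t4 - t5 ^+ 3).
Proof. by certificate (Igen 9 * t1 - Igen 9 - t5 ^+ 2 * Igen 0 - t5 * t4 * Igen 0). Qed.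

Lemma red_t5t1t4t3 : congrI (t5 * t1 * t4 * t3)
  (t5 ^+ 2 * t1 * t4 + t5 * t1 * t4 + t5 ^+ 2 * t4 + t5 ^+ 3).
Proof.
by certificate (t5 * t1 * Igen 3 + Igen 13 * t5 - Igen 14 * t5 - Igen 10 * t5 - Igen 14 * t4
  - t5 * Igen 10 - t5 * Igen 15 - t5 * Igen 14 + t5 * Igen 13 + t5 * Igen 17 - Igen 11 * t1
  - Igen 14 * t1 - Igen 10 * t4 + Igen 13 * t4 + t4 * Igen 12 + t5 * Igen 2 + t5 * Igen 1
  - t4 * Igen 5 + 2^-1 *: (t4 * Igen 3) + Igen 2 * t1 - Igen 1 * t1 + Igen 9 + Igen 3 * t1
  - t4 * Igen 0).
Qed.

Local Notation Bspan := (span_mod Ig (@Bset K)).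

(** * Spanning *)

(* Words are matched syntactically: unifying two distinct letters would unfold the
   monoid algebra. *)
Ltac Bword := apply: span_mod_mem; lazymatch goal with
  | |- Bset (t4 * t1) => by left
  | |- Bset t3 => by right; left
  | |- Bset t1 => by do 2 right; left
  | |- Bset 1 => by do 3 right; left; exists 0
  | |- Bset t5 => by do 3 right; left; exists 1
  | |- Bset (t5 ^+ ?n) => by do 3 right; left; exists n
  | |- Bset t4 => by do 4 right; left; exists 0; rewrite expr0 mul1r
  | |- Bset (t5 * t4) => by do 4 right; left; exists 1
  | |- Bset (t5 ^+ ?n * t4) => by do 4 right; left; exists n
  | |- Bset (t1 * t4) => by do 5 right; left; exists 0; rewrite expr0 mul1r
  | |- Bset (t5 * t1 * t4) => by do 5 right; left; exists 1
  | |- Bset (t5 ^+ ?n * t1 * t4) => by do 5 right; left; exists n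
  | |- Bset (t5 * t1) => by do 6 right; left; exists 1
  | |- Bset (t5 ^+ ?n * t1) => by do 6 right; left; exists n
  | |- Bset (t3 * t5) => by do 7 right; left; exists 1
  | |- Bset (t3 * t5 ^+ ?n * t4) => by do 9 right; left; exists n
  | |- Bset (t3 * t5 ^+ ?n) => by do 7 right; left; exists n
  | |- Bset (t1 * t5) => by do 8 right; left; exists 1
  | |- Bset (t1 * t5 ^+ ?n * t4) => by do 10 right; exists n
  | |- Bset (t1 * t5 ^+ ?n) => by do 8 right; left; exists n
  | |- Bset (t3 * t4) => by do 9 right; left; exists 0; rewrite expr0 mulr1
  | |- Bset (t3 * t5 * t4) => by do 9 right; left; exists 1
  | |- Bset (t1 * t5 * t4) => by do 10 right; exists 1
  end.

Ltac span_lin := repeat lazymatch goal with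
  | |- span_mod _ _ (_ + _) => apply: span_modD
  | |- span_mod _ _ (- _) => apply: span_modN
  | |- span_mod _ _ (_ *: _) => apply: span_modZ
  end.

Ltac reduce r := apply: (span_mod_eqmod r); span_lin.

(* The part of [Bset] whose span is stable under left multiplication by [t5]. *)
Definition Bset_t5 (b : A) : Prop :=
  b = t4 * t1 \/ (exists n, b = t5 ^+ n) \/ (exists n, b = t5 ^+ n * t4) \/
  (exists n, b = t5 ^+ n * t1 * t4) \/ (exists n, b = t5 ^+ n * t1).
Local Notation Pspan := (span_mod Ig Bset_t5).

Ltac Pword := apply: span_mod_mem; lazymatch goal with
  | |- Bset_t5 (t4 * t1) => by left
  | |- Bset_t5 t5 => by right; left; exists 1
  | |- Bset_t5 (t5 ^+ ?n) => by right; left; exists n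
  | |- Bset_t5 t4 => by do 2 right; left; exists 0; rewrite expr0 mul1r
  | |- Bset_t5 (t5 * t4) => by do 2 right; left; exists 1
  | |- Bset_t5 (t5 ^+ ?n * t4) => by do 2 right; left; exists n
  | |- Bset_t5 (t1 * t4) => by do 3 right; left; exists 0; rewrite expr0 mul1r
  | |- Bset_t5 (t5 * t1 * t4) => by do 3 right; left; exists 1
  | |- Bset_t5 (t5 ^+ ?n * t1 * t4) => by do 3 right; left; exists n
  | |- Bset_t5 t1 => by do 4 right; exists 0; rewrite expr0 mul1r
  | |- Bset_t5 (t5 * t1) => by do 4 right; exists 1
  | |- Bset_t5 (t5 ^+ ?n * t1) => by do 4 right; exists n
  end.

Lemma Pspan_Bspan f : Pspan f -> Bspan f.
Proof.
apply: span_mod_sub => _ [->|[[n ->]|[[n ->]|[[n ->]|[[|n] ->]]]]]; try Bword.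
by rewrite expr0 mul1r; Bword.
Qed.

Lemma Pspan_mull5 f : Pspan f -> Pspan (t5 * f).
Proof.
apply: (span_modMl (@fmalg_scalerAr K 'I_4)) => _ [->|[[n ->]|[[n ->]|[[n ->]|[n ->]]]]].
- by rewrite mulrA; reduce red_t5t4t1; Pword.
- by rewrite -exprS; Pword.
- by rewrite mulrA -exprS; Pword.
- by rewrite !mulrA -exprS; Pword.
- by rewrite mulrA -exprS; Pword.
Qed.

Lemma Bspan_t5nM n w : Pspan w -> Bspan (t5 ^+ n * w).
Proof.
move=> Pw; apply: Pspan_Bspan.
elim: n => [|n IHn]; first by rewrite expr0 mul1r.
by rewrite exprS -mulrA; apply: Pspan_mull5.
Qed.

Lemma Bspan_t5n_congr n w r : congrI w r -> Pspan r -> Bspan (t5 ^+ n * w).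
Proof. by move=> wr /(span_mod_eqmod wr); apply: Bspan_t5nM. Qed.

Ltac t5_prefix n r :=
  move: (Bspan_t5n_congr n r); rewrite !mulrA -?exprSr; apply; span_lin; Pword.

Lemma Bset_cases (P : A -> Prop) :
  P (t4 * t1) -> P t3 -> P t1 -> (forall n, P (t5 ^+ n)) -> (forall n, P (t5 ^+ n * t4)) ->
  (forall n, P (t5 ^+ n * t1 * t4)) -> (forall n, P (t5 ^+ n.+1 * t1)) ->
  (forall n, P (t3 * t5 ^+ n.+1)) -> (forall n, P (t1 * t5 ^+ n.+1)) ->
  (forall n, P (t3 * t5 ^+ n * t4)) -> (forall n, P (t1 * t5 ^+ n.+1 * t4)) ->
  forall b, Bset b -> P b.
Proof.
move=> P41 P3 P1 P5 P54 P514 P51 P35 P15 P354 P154 b.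
case=> [->|[->|[->|[[n ->]|[[n ->]|[[n ->]|[[n [n1 ->]]|[[n [n1 ->]]|[[n [n1 ->]]
  |[[n ->]|[n [n1 ->]]]]]]]]]]]].
- exact: P41.
- exact: P3.
- exact: P1.
- exact: P5.
- exact: P54.
- exact: P514.
- by case: n n1 => [|n] n1; [case: (notF n1) | apply: P51].
- by case: n n1 => [|n] n1; [case: (notF n1) | apply: P35].
- by case: n n1 => [|n] n1; [case: (notF n1) | apply: P15].
- exact: P354.
- by case: n n1 => [|n] n1; [case: (notF n1) | apply: P154].
Qed.

Lemma Bset_mulr5 b : Bset b -> Bspan (b * t5).
Proof.
move: b; apply: (@Bset_cases (fun b => Bspan (b * t5))) => [||| n | n | n | n | n | n | n | n].
- by reduce red_t4t1t5; Bword.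
- by Bword.
- by Bword.
- by rewrite -exprSr; Bword.
- by rewrite -mulrA; apply: span_modM0 red_t4t5.
- by rewrite -mulrA; apply: span_modM0 red_t4t5.
- by t5_prefix n red_t5t1t5.
- by rewrite -mulrA -exprSr; Bword.
- by rewrite -mulrA -exprSr; Bword.
- by rewrite -mulrA; apply: span_modM0 red_t4t5.
- by rewrite -mulrA; apply: span_modM0 red_t4t5.
Qed.

Lemma Bspan_mulr5 f : Bspan f -> Bspan (f * t5).
Proof. exact: span_modMr Bset_mulr5. Qed.

Lemma Bset_mulr4 b : Bset b -> Bspan (b * t4).
Proof.
move: b; apply: (@Bset_cases (fun b => Bspan (b * t4))) => [||| n | n | n | n | n | n | n | n].
- by reduce red_t4t1t4; Bword.
- by Bword.
- by Bword.
- by Bword.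
- by rewrite -mulrA; apply: span_modM0 red_t4t4.
- by rewrite -mulrA; apply: span_modM0 red_t4t4.
- by Bword.
- by Bword.
- by Bword.
- by rewrite -mulrA; apply: span_modM0 red_t4t4.
- by rewrite -mulrA; apply: span_modM0 red_t4t4.
Qed.

Lemma Bspan_mulr4 f : Bspan f -> Bspan (f * t4).
Proof. exact: span_modMr Bset_mulr4. Qed.

Ltac congr_mull r a := apply: (@eqmod_byMl _ _ _ _ r a); rewrite ?exprSr; nc_ring.

Section PrefixT1T3.
Variable y : A.
Hypothesis y13 : y = t1 \/ y = t3.

Lemma prefix_t5n_t4 n : Bspan (y * t5 ^+ n * t4).
Proof. by case: y13 => ->; case: n => [|n]; rewrite ?expr0 ?mulr1; Bword. Qed.

Lemma prefix_t5Sn n : Bspan (y * t5 ^+ n.+1).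
Proof. by case: y13 => ->; Bword. Qed.

Lemma prefix_t5Sn_t1 n : Bspan (y * t5 ^+ n.+1 * t1).
Proof.
elim: n => [|n IHn].
  by case: y13 => ->; rewrite expr1; [reduce red_t1t5t1 | reduce red_t3t5t1]; Bword.
have red : congrI (y * t5 ^+ n.+2 * t1) (y * t5 ^+ n.+1 * t1 * t5 - y * t5 ^+ n.+1 * t4).
  by congr_mull red_t5t1t5 (- (y * t5 ^+ n)).
apply: (span_mod_eqmod red).
by span_lin; [apply/Bspan_mulr5/IHn | apply: prefix_t5n_t4].
Qed.

Lemma prefix_t5n_t4t1 n : Bspan (y * t5 ^+ n * t4 * t1).
Proof.
case: n => [|n].
  by case: y13 => ->; rewrite expr0 mulr1; [reduce red_t1t4t1 | reduce red_t3t4t1]; Bword.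
have red : congrI (y * t5 ^+ n.+1 * t4 * t1)
  (y * t5 ^+ n.+3 - y * t5 ^+ n.+1 * t1 * t4 - y * t5 ^+ n.+2 * t1).
  by congr_mull red_t5t4t1 (y * t5 ^+ n).
apply: (span_mod_eqmod red).
by span_lin; [apply: prefix_t5Sn | apply/Bspan_mulr4/prefix_t5Sn_t1 | apply: prefix_t5Sn_t1].
Qed.

Lemma prefix_t5Sn_t3 n : Bspan (y * t5 ^+ n.+1 * t3).
Proof.
have red : congrI (y * t5 ^+ n.+1 * t3) (2 *: (y * t5 ^+ n * t4 * t1) + y * t5 ^+ n.+1 * t1
  - 2 *: (y * t5 ^+ n.+2) - 2 *: (y * t5 ^+ n * t4)).
  by congr_mull red_t5t3 (y * t5 ^+ n).
apply: (span_mod_eqmod red).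
span_lin; [apply: prefix_t5n_t4t1 | apply: prefix_t5Sn_t1 | apply: prefix_t5Sn | apply: prefix_t5n_t4].
Qed.

Lemma prefix_t5n_t4t3 n : Bspan (y * t5 ^+ n * t4 * t3).
Proof.
have red : congrI (y * t5 ^+ n * t4 * t3) (2 *: (y * t5 ^+ n * t4) - y * t5 ^+ n * t4 * t1
  + y * t5 ^+ n.+1 * t4 + y * t5 ^+ n.+2).
  by congr_mull red_t4t3 (y * t5 ^+ n).
apply: (span_mod_eqmod red).
span_lin; [apply: prefix_t5n_t4 | apply: prefix_t5n_t4t1 | apply: prefix_t5n_t4 | apply: prefix_t5Sn].
Qed.

End PrefixT1T3.

Lemma Bset_mulr1 b : Bset b -> Bspan (b * t1).
Proof.
move: b; apply: (@Bset_cases (fun b => Bspan (b * t1))) => [||| n | n | n | n | n | n | n | n].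
- by rewrite -mulrA; apply: (span_mod_eqmod (eqmodMl _ red_t1t1)); Bword.
- by reduce red_t3t1; Bword.
- by reduce red_t1t1; Bword.
- by case: n => [|n]; rewrite ?expr0 ?mul1r; Bword.
- by rewrite -mulrA; apply: Bspan_t5nM; Pword.
- case: n => [|n]; last by t5_prefix n red_t5t1t4t1.
  by rewrite expr0 mul1r; reduce red_t1t4t1; Bword.
- by rewrite -mulrA; apply: (span_mod_eqmod (eqmodMl _ red_t1t1)); Bword.
- by apply: prefix_t5Sn_t1; right.
- by apply: prefix_t5Sn_t1; left.
- by apply: prefix_t5n_t4t1; right.
- by apply: prefix_t5n_t4t1; left.
Qed.

Lemma Bspan_mulr1 f : Bspan f -> Bspan (f * t1).
Proof. exact: span_modMr Bset_mulr1. Qed.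

Lemma Bset_mulr3 b : Bset b -> Bspan (b * t3).
Proof.
move: b; apply: (@Bset_cases (fun b => Bspan (b * t3))) => [||| n | n | n | n | n | n | n | n].
- by reduce red_t4t1t3; Bword.
- by reduce red_t3t3; Bword.
- by reduce red_t1t3; Bword.
- by case: n => [|n]; [rewrite expr0 mul1r; Bword | t5_prefix n red_t5t3].
- by t5_prefix n red_t4t3.
- case: n => [|n]; last by t5_prefix n red_t5t1t4t3.
  by rewrite expr0 mul1r; reduce red_t1t4t3; Bword.
- by t5_prefix n red_t5t1t3.
- by apply: prefix_t5Sn_t3; right.
- by apply: prefix_t5Sn_t3; left.
- by apply: prefix_t5n_t4t3; right.
- by apply: prefix_t5n_t4t3; left.
Qed.

Lemma Bspan_mulr3 f : Bspan f -> Bspan (f * t3).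
Proof. exact: span_modMr Bset_mulr3. Qed.

Lemma letter_cases (i : 'I_4) :
  [\/ letter K i = t1, letter K i = t3, letter K i = t4 | letter K i = t5].
Proof.
case: i => -[|[|[|[|i //]]]] lti;
  [constructor 1 | constructor 2 | constructor 3 | constructor 4]; congr letter; exact: val_inj.
Qed.

Lemma Bspan_all f : Bspan f.
Proof.
elim/fmalg_ind: f => [|f i Bf|f g|c f]; [Bword | | exact: span_modD | exact: span_modZ].
move: (letter_cases i); rewrite /letter => -[] ->.
- exact: Bspan_mulr1.
- exact: Bspan_mulr3.
- exact: Bspan_mulr4.
- exact: Bspan_mulr5.
Qed.

End Spanning.

Theorem lemma4 (K : fieldType) (charK0 : [pchar K] =i pred0) :
  forall f : freeAlg K,
    exists s : seq (K * freeAlg K),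
      (forall t, t \in s -> Bset t.2) /\
      inI (f - \sum_(t <- s) t.1 *: t.2).
Proof. exact: Bspan_all. Qed.
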